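(* Let $H$ be a complex Hadamard matrix, let $\{C_1,\dots,C_t\}$ be a partition of the set of columns of $H$, and let $\{R,R_1\}$ be a partition of the set of rows of $H$. For $1\le i\le t$ let $M_{1i}$ denote the submatrix of $H$ with rows $R_1$ and columns $C_i$. Suppose that for all $i\neq j$, every column of $M_{1i}$ is orthogonal (with respect to the standard Hermitian inner product) to every column of $M_{1j}$. Then for any choice of $a_1,\dots,a_t\in\mathbb{T}$, the matrix obtained from $H$ by replacing each $M_{1i}$ by $a_iM_{1i}$ (all other entries unchanged) is a complex Hadamard matrix. In particular, for any single index $i$ and any $a\in\mathbb{T}$, replacing $M_{1i}$ by $aM_{1i}$ yields a complex Hadamard matrix.
   Context: $\mathbb{T}$ is the set of complex numbers of modulus $1$. A complex Hadamard matrix of order $n$ is an $n\times n$ matrix $H$ with all entries in $\mathbb{T}$ and $HH^{\ast}=nI_n$ (equivalently, its columns are pairwise orthogonal). *)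

(* Complex numbers: an arbitrary numClosedFieldType C
   (e.g. the complex numbers); T = {z : C | `|z| = 1}. *)
From HB Require Import structures.
From mathcomp Require Import all_boot all_order all_algebra.
Set Implicit Arguments. Unset Strict Implicit. Unset Printing Implicit Defensive.
Import Order.TTheory GRing.Theory Num.Theory.
Local Open Scope ring_scope.

Definition complex_hadamard (C : numClosedFieldType) (n : nat) (H : 'M[C]_n) : Prop :=
  (forall i j, `|H i j| = 1) /\
  H *m (map_mx Num.conj H)^T = (n%:R : C)%:M.

Definition col_inner (C : numClosedFieldType) (n : nat) (H : 'M[C]_n)
  (S : {set 'I_n}) (k l : 'I_n) : C :=
  \sum_(r in S) H r k * Num.conj (H r l).

(* H with, for each column class i (columns k with cls k = i), the block with rows
   in R1 multiplied by a i. *)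
Definition scale_blocks (C : numClosedFieldType) (n t : nat) (H : 'M[C]_n)
  (R1 : {set 'I_n}) (cls : 'I_n -> 'I_t) (a : 'I_t -> C) : 'M[C]_n :=
  \matrix_(r, k) (if r \in R1 then a (cls k) * H r k else H r k).

From HB Require Import structures.
From mathcomp Require Import all_boot all_order all_algebra ring.
Import Order.TTheory GRing.Theory Num.Theory.
Local Open Scope ring_scope.

(* H H^* = n I says exactly that the columns of H are pairwise orthogonal of
   squared norm n.  Scaling the R1-block of column k by a_(cls k) multiplies the
   R1-part of the inner product of columns k and l by a_(cls k) conj(a_(cls l)):
   this factor is |a_i|^2 = 1 when both columns lie in the same class C_i, and
   otherwise the R1-part vanishes by hypothesis.  So all column inner products,
   and hence the Hadamard property, are unchanged. *)

Lemma mulmx_scalar_sym (F : fieldType) (n : nat) (A B : 'M[F]_n) (c : F) :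
  c != 0 -> A *m B = c%:M -> B *m A = c%:M.
Proof.
move=> c_neq0 AB; have AcB : A *m (c^-1 *: B) = 1%:M.
  by rewrite -scalemxAr AB scale_scalar_mx mulVf.
have BA := mulmx1C AcB; rewrite -scalemxAl in BA.
by rewrite -[B *m A]scale1r -(divff c_neq0) -scalerA BA scalemx1.
Qed.

Lemma mulmx_scalar_natr_sym (F : numFieldType) (n : nat) (A B : 'M[F]_n) :
  A *m B = (n%:R : F)%:M -> B *m A = (n%:R : F)%:M.
Proof.
case: n A B => [|n] A B; first by move=> _; apply/matrixP => -[].
by apply: mulmx_scalar_sym; rewrite pnatr_eq0.
Qed.

Section ColumnInnerProducts.

Context {C : numClosedFieldType} {n : nat}.
Implicit Types (H : 'M[C]_n) (S : {set 'I_n}).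

Lemma col_inner_setTE H k l :
  col_inner H setT k l = (H^T *m map_mx Num.conj H) k l.
Proof. by rewrite mxE; apply: eq_big => [r|r _]; rewrite ?inE ?mxE. Qed.

Lemma col_inner_setT_split H S k l :
  col_inner H setT k l = col_inner H S k l + col_inner H (~: S) k l.
Proof. by rewrite /col_inner (big_setID S) setTI setTD. Qed.

Lemma complex_hadamard_colsP H :
  complex_hadamard H <->
  (forall i j, `|H i j| = 1) /\
  (forall k l, col_inner H setT k l = (n%:R : C) *+ (k == l)).
Proof.
have gram_sym : H *m (map_mx Num.conj H)^T = (n%:R : C)%:M <->
             H^T *m map_mx Num.conj H = (n%:R : C)%:M.
  split=> /(congr1 trmx); rewrite trmx_mul trmxK tr_scalar_mx => gram.
    exact: mulmx_scalar_natr_sym.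
  by rewrite mulmx_scalar_natr_sym.
split=> -[unimodular gram]; split=> //.
  by move=> k l; rewrite col_inner_setTE (gram_sym.1 gram) mxE.
by apply/gram_sym/matrixP => k l; rewrite -col_inner_setTE gram mxE.
Qed.

End ColumnInnerProducts.

Section ScaleBlocks.

Variables (C : numClosedFieldType) (n t : nat) (H : 'M[C]_n).
Variables (R1 : {set 'I_n}) (cls : 'I_n -> 'I_t) (a : 'I_t -> C).

Lemma col_inner_scale_blocks_in k l :
  col_inner (scale_blocks H R1 cls a) R1 k l =
  a (cls k) * Num.conj (a (cls l)) * col_inner H R1 k l.
Proof.
rewrite /col_inner mulr_sumr; apply: eq_bigr => r r_in.
by rewrite !mxE r_in rmorphM /=; ring.
Qed.

Lemma col_inner_scale_blocks_out k l :
  col_inner (scale_blocks H R1 cls a) (~: R1) k l = col_inner H (~: R1) k l.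
Proof.
by apply: eq_bigr => r; rewrite in_setC => /negbTE r_out; rewrite !mxE r_out.
Qed.

Hypothesis a_unimodular : forall i, `|a i| = 1.
Hypothesis blocks_orthogonal :
  forall k l, cls k != cls l -> col_inner H R1 k l = 0.

Lemma col_inner_scale_blocks k l :
  col_inner (scale_blocks H R1 cls a) setT k l = col_inner H setT k l.
Proof.
rewrite !(col_inner_setT_split _ R1) col_inner_scale_blocks_out.
rewrite col_inner_scale_blocks_in; congr (_ + _).
have [cls_kl | /blocks_orthogonal ->] := eqVneq (cls k) (cls l).
  by rewrite -cls_kl -normCK a_unimodular expr1n mul1r.
by rewrite mulr0.
Qed.

Lemma complex_hadamard_scale_blocks :
  complex_hadamard H -> complex_hadamard (scale_blocks H R1 cls a).
Proof.
rewrite !complex_hadamard_colsP => -[H_unimodular H_cols]; split=> [r k|k l].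
  by rewrite mxE; case: ifP; rewrite ?normrM ?a_unimodular ?H_unimodular ?mul1r.
by rewrite col_inner_scale_blocks H_cols.
Qed.

End ScaleBlocks.

Theorem theorem6p3 (C : numClosedFieldType) (n t : nat) (H : 'M[C]_n)
  (cls : 'I_n -> 'I_t) (R1 : {set 'I_n}) :
  complex_hadamard H ->
  (forall k l : 'I_n, cls k != cls l -> col_inner H R1 k l = 0) ->
  (forall a : 'I_t -> C, (forall i, `|a i| = 1) ->
     complex_hadamard (scale_blocks H R1 cls a)) /\
  (forall (i : 'I_t) (a : C), `|a| = 1 ->
     complex_hadamard (scale_blocks H R1 cls (fun j => if j == i then a else 1))).
Proof.
move=> H_had orth; split=> [a a_unimodular | i a a_unimodular].
  exact: complex_hadamard_scale_blocks.
by apply: complex_hadamard_scale_blocks => // j; case: ifP; rewrite ?normr1.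
Qed.
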